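(* Let $r>1$, $0<a<r$ coprime, $\theta\in\Theta$ and $j\in\{0,\dots,r-1\}$. The representation $\mathcal F_j$ is $\theta$-stable (resp. $\theta$-semistable) if and only if $\theta(V_{i,j})>0$ (resp. $\ge0$) for every vertex $i$ for which $V_{i,j}$ is a non-empty proper subset of the vertices forming a subrepresentation of $\mathcal F_j$, and $\theta(W_{i,j})>0$ (resp. $\ge0$) for every vertex $i$ for which $W_{i,j}$ is a non-empty proper subset of the vertices forming a subrepresentation of $\mathcal F_j$.
   Context: Notation: for integers $s$ and $t>0$, $\langle s\rangle_t$ is the least non-negative integer congruent to $s$ modulo $t$. A pair of integers $(r,a)$ is admissible if $r\ge1$, $0\le a<r$, $\gcd(r,a)=1$ (so $a=0$ only for $r=1$). For admissible $(r,a)$ put $N(r,a)=\mathbb Z^3+\mathbb Z\cdot\frac1r(1,a,r-a)\subset\mathbb Q^3$; $e_1,e_2,e_3$ is the standard basis and $\Delta(r,a)$ the cone spanned by $e_1,e_2,e_3$. Let $b$ be an inverse of $a$ modulo $r$ and $p_i=\frac1r(\langle -ib\rangle_r,r-i,i)$, $i=0,\dots,r$ (so $p_0=e_2$, $p_r=e_3$, $p_{r-a}=\frac1r(1,a,r-a)$). For $r>1$ let $(r_L,a_L)=(r-a,\langle r\rangle_{r-a})$, $(r_R,a_R)=(a,\langle -r\rangle_a)$; there are lattice isomorphisms $L:N(r_L,a_L)\to N(r,a)$, $R:N(r_R,a_R)\to N(r,a)$ with $L(e_1)=e_1$, $L(e_2)=e_2$, $L(e_3)=p_{r-a}$, $R(e_1)=e_1$,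 $R(e_2)=p_{r-a}$, $R(e_3)=e_3$. The Danilov fan $\Sigma(r,a)$ is defined recursively: $\Sigma(1,0)$ is $\Delta(1,0)$ with its faces; for $r>1$, $\Sigma(r,a)$ consists of the cone spanned by $e_2,e_3,p_{r-a}$ with its faces, together with $L(\Sigma(r_L,a_L))$ and $R(\Sigma(r_R,a_R))$. The Danilov resolution $Y$ is the smooth toric variety of $\Sigma(r,a)$, with torus $T$; its rays are spanned by $e_1,p_0,\dots,p_r$; $D_i$ is the $T$-invariant prime divisor of the ray through $p_i$ and $E_j$ that of $e_j$. For a $3$-dimensional cone $\sigma$, $U_\sigma\cong\mathbb C^3$ is its affine chart; for $j=0,\dots,r-1$, $\sigma_j$ is the cone spanned by $p_j,p_{j+1},e_1$ (a cone of $\Sigma(r,a)$). The permutation $\tau(r,a,\cdot)$ of $\{0,\dots,r-1\}$: if $a\in\{1,r-1\}$, $\tau(r,a,i)=\langle ai-1\rangle_r$; otherwise $\tau(r,a,i)=\tau(r-a,\langle r\rangle_{r-a},\langle i\rangle_{r-a})$ for $i\ge a$ and $\tau(r,a,i)=(r-a)+\tau(a,\langle -r\rangle_a,i)$ for $i<a$; $\xi(r,a,\cdot)$ is its inverse. With indices mod $r$, on $Y$ define $Y_{i-a}=\sum_{k=0}^{\tau(r,a,i)}D_k$, $Z_i=\sum_{k=\tau(r,a,i)+1}^{r}D_k$ ($i=0,\dots,r-1$), and $X_0,\dots,X_{r-1}$ the unique divisors with $X_0=E_1$ and $X_i+Z_{i+1}=Z_i+X_{i-a}$; these satisfy $X_i+Y_{i+1}=Y_i+X_{i+a}$,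 $X_i+Z_{i+1}=Z_i+X_{i-a}$, $Y_i+Z_{i+a}=Z_i+Y_{i-a}$. The McKay quiver has vertices $0,\dots,r-1$ (mod $r$) and arrows $x_i:i\to i+1$, $y_i:i\to i+a$, $z_i:i\to i-a$; a representation assigns a complex number $V(\alpha)$ to each arrow with $V(y_{i+1})V(x_i)=V(x_{i+a})V(y_i)$, $V(z_{i+1})V(x_i)=V(x_{i-a})V(z_i)$, $V(y_{i-a})V(z_i)=V(z_{i+a})V(y_i)$. Subrepresentations of $V$ correspond to subsets $S$ of vertices such that whenever an arrow $\alpha$ has tail in $S$ and $V(\alpha)\ne0$, its head is in $S$. $\Theta=\{\theta\in\mathbb Q^r:\sum_i\theta_i=0\}$, $\theta(S)=\sum_{i\in S}\theta_i$; $V$ is $\theta$-stable (resp. semistable) if $\theta(S)>0$ (resp. $\ge0$) for all non-empty proper such $S$. The family $\mathcal F$ on $Y$ consists of the line bundles $\mathcal O(X_i),\mathcal O(Y_i),\mathcal O(Z_i)$ with their canonical sections; concretely, for $s\in U_\sigma$, each effective $T$-invariant divisor $D$ restricts on $U_\sigma$ to the divisor of a unique monomial $f_{\sigma,D}$ in the toric coordinates of $U_\sigma$, and $\mathcal F_s$ is the representation with $x_i,y_i,z_i$ represented by $f_{\sigma,X_i}(s),f_{\sigma,Y_i}(s),f_{\sigma,Z_i}(s)$. $\mathcal F_j$ denotes $\mathcal F_s$ for $s$ the $T$-fixed point of $U_{\sigma_j}$. For a vertex $i$ and $j\in\{0,\dots,r-1\}$: $V_{i,j}$ is the set of vertices $i,\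 i+(r-a),\ i+2(r-a),\dots$ (mod $r$) up to and including the first occurrence of $\xi(r,a,j)$; $W_{i,j}$ is the set of vertices $\xi(r,a,j)+(r-a),\ \xi(r,a,j)+2(r-a),\dots$ (mod $r$) up to and including the first occurrence of $i$. *)

From HB Require Import structures.
From mathcomp Require Import all_boot all_order all_algebra.
From mathcomp Require Import algC.
Set Implicit Arguments. Unset Strict Implicit. Unset Printing Implicit Defensive.
Import Order.TTheory GRing.Theory Num.Theory.

(* The permutation tau(r,a,.), computed with fuel (r strictly decreases). *)
Fixpoint tau_f (fuel r a i : nat) : nat :=
  match fuel with
  | 0 => 0
  | f.+1 =>
    if (a == 1) || (a == r.-1) then (a * i + r.-1) %% r   (* <a i - 1>_r *)
    else if a <= i then tau_f f (r - a) (r %% (r - a)) (i %% (r - a))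
    else (r - a) + tau_f f a ((a - r %% a) %% a) i      (* <-r>_a *)
  end.

Definition tau (r a i : nat) : nat := tau_f r r a i.

Definition xi (r a j : nat) : nat := find (fun i => tau r a i == j) (iota 0 r).

(* T-invariant divisors on Y: integer coefficients on the rays;
   None = ray of e_1 (divisor E_1), Some k = ray of p_k (divisor D_k), 0<=k<=r.
   (E_2 = D_0, E_3 = D_r.) *)
Definition divisor := option nat -> int.

Definition Zdiv (r a i : nat) : divisor := fun rho =>
  match rho with
  | None => Posz 0
  | Some k => Posz (nat_of_bool ((tau r a (i %% r) < k) && (k <= r)))
  end.

(* Y_m = sum_{k=0}^{tau(m+a)} D_k  (from Y_{i-a} = sum_{k=0}^{tau(i)} D_k) *)
Definition Ydiv (r a m : nat) : divisor := fun rho =>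
  match rho with
  | None => Posz 0
  | Some k => Posz (nat_of_bool (k <= tau r a ((m + a) %% r)))
  end.

Definition nX (r a i : nat) : nat :=
  find (fun k => (k * a) %% r == i %% r) (iota 0 r).

(* X_i: the unique solution of X_0 = E_1, X_i + Z_{i+1} = Z_i + X_{i-a},
   i.e. X_{n a} = E_1 + sum_{m=1}^{n} (Z_{m a} - Z_{m a + 1}). *)
Definition Xdiv (r a i : nat) : divisor := fun rho =>
  (Posz (nat_of_bool (rho == None))
   + \sum_(1 <= m < (nX r a i).+1) (Zdiv r a (m * a) rho - Zdiv r a (m * a + 1) rho))%R.

(* Value at the T-fixed point of U_{sigma_j} (sigma_j = cone(p_j, p_{j+1}, e_1))
   of the monomial f_{sigma_j, D}: the monomial is prod of the coordinates of
   the rays of sigma_j raised to the coefficients of D on these rays; at the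
   origin it equals 1 iff all these exponents vanish, and 0 otherwise. *)
Definition fixval (D : divisor) (j : nat) : algC :=
  if [&& D None == 0%R, D (Some j) == 0%R & D (Some j.+1) == 0%R] then 1%R else 0%R.

Record mckay_rep := MckayRep {
  rep_x : nat -> algC;
  rep_y : nat -> algC;
  rep_z : nat -> algC }.

Definition Frep (r a j : nat) : mckay_rep :=
  MckayRep (fun i => fixval (Xdiv r a i) j)
           (fun i => fixval (Ydiv r a i) j)
           (fun i => fixval (Zdiv r a i) j).

Definition is_subrep (r a : nat) (V : mckay_rep) (S : {set 'I_r}) : Prop :=
  forall i k : 'I_r, i \in S ->
    ((rep_x V i != 0%R /\ val k = (i + 1) %% r) \/
     (rep_y V i != 0%R /\ val k = (i + a) %% r) \/
     (rep_z V i != 0%R /\ val k = (i + (r - a)) %% r)) -> k \in S.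

Definition theta_of (r : nat) (theta : 'I_r -> rat) (S : {set 'I_r}) : rat :=
  (\sum_(i in S) theta i)%R.

Definition stable (r a : nat) (theta : 'I_r -> rat) (V : mckay_rep) : Prop :=
  forall S : {set 'I_r}, S != set0 -> S != setT -> is_subrep a V S ->
    (0 < theta_of theta S)%R.

Definition semistable (r a : nat) (theta : 'I_r -> rat) (V : mckay_rep) : Prop :=
  forall S : {set 'I_r}, S != set0 -> S != setT -> is_subrep a V S ->
    (0 <= theta_of theta S)%R.

Definition Vset (r a : nat) (i j : nat) : {set 'I_r} :=
  let x := xi r a j in
  let M := find (fun m => (i + m * (r - a)) %% r == x) (iota 0 r) in
  [set k : 'I_r | [exists m : 'I_M.+1, val k == (i + m * (r - a)) %% r]].

Definition Wset (r a : nat) (i j : nat) : {set 'I_r} :=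
  let x := xi r a j in
  let M := (find (fun m => (x + m.+1 * (r - a)) %% r == i) (iota 0 r)).+1 in
  [set k : 'I_r | [exists m : 'I_M, val k == (x + m.+1 * (r - a)) %% r]].

(* Order the vertices along the walk xi(j) + (r-a), xi(j) + 2(r-a), ..., xi(j).  At the
   fixed point of sigma_j every x-arrow vanishes and every y- or z-arrow joins neighbours on
   this walk: the two arrows that would close it into a cycle (y at its first vertex, z at
   xi(j)) vanish because tau(xi(j)) = j.  Hence wherever membership in a subrepresentation S
   changes between consecutive vertices, the arrow leaving S is zero, so the initial segment
   W_{i,j} or the final segment V_{i,j} cut off there is a subrepresentation too.  Summation
   by parts, using sum theta = 0, writes theta(S) as the sum of theta over these segments. *)

From HB Require Import structures.
From mathcomp Require Import all_boot all_order all_algebra.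
From mathcomp Require Import algC zify.
Set Implicit Arguments. Unset Strict Implicit. Unset Printing Implicit Defensive.

Import Order.TTheory GRing.Theory Num.Theory.

Lemma coprime_subr r a : a <= r -> coprime r (r - a) = coprime r a.
Proof.
move=> le_ar; rewrite /coprime.
have -> : gcdn r (r - a) = gcdn (r - a) a.
  by rewrite gcdnC -{2}(subnK le_ar) gcdnDl.
by rewrite gcdnC -(gcdnDr a (r - a)) subnK // gcdnC.
Qed.

Lemma coprime_mod_gt0 k m : 1 < k -> coprime k m -> 0 < m %% k.
Proof.
move=> k_gt1; rewrite -coprime_modr lt0n; apply: contraTneq => ->.
by rewrite /coprime gcdn0 neq_ltn k_gt1 orbT.
Qed.

Lemma coprime_mulmod_inj r d m n : coprime r d -> m < r -> n < r ->
  m * d = n * d %[mod r] -> m = n.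
Proof.
move=> co_rd; wlog le_mn : m n / m <= n => [wlog_le lt_mr lt_nr eq_mn|lt_mr lt_nr].
  by case: (leqP m n) => [/wlog_le|/ltnW/wlog_le]; [apply | move=> ->].
move/eqP; rewrite eq_sym eqn_mod_dvd ?leq_mul2r ?le_mn ?orbT // -mulnBl Gauss_dvdl //.
have [|/dvdn_leq le_r] := posnP (n - m); first lia.
by move=> /le_r; lia.
Qed.

Lemma exists_mod_window d a i : 0 < d -> i < d ->
  exists2 k, a <= k < a + d & k %% d = i.
Proof.
move=> d_gt0 lt_id; exists (a + (i + (d - a %% d)) %% d).
  by rewrite leq_addr ltn_add2l ltn_pmod.
rewrite modnDmr; have -> : a + (i + (d - a %% d)) = a %/ d * d + i + d.
  by rewrite {1}(divn_eq a d); have := ltn_pmod a d_gt0; lia.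
by rewrite modnDr modnMDl modn_small.
Qed.

Lemma affine_mod_onto r d c j : coprime r d -> j < r ->
  exists2 i, i < r & (d * i + c) %% r = j.
Proof.
move=> co_rd lt_jr; have r_gt0 : 0 < r by lia.
pose f (i : 'I_r) : 'I_r := Ordinal (ltn_pmod (d * i + c) r_gt0).
have f_inj : injective f.
  move=> i k /(congr1 val) /eqP /=; rewrite ![_ + c]addnC eqn_modDl ![d * _]mulnC.
  by move=> /eqP /(coprime_mulmod_inj co_rd (ltn_ord i) (ltn_ord k)) /val_inj.
by have /codomP[i /(congr1 val) /= ->] := injF_onto f_inj (Ordinal lt_jr); exists i.
Qed.

Lemma tau_f_onto f r a j : r <= f -> 1 < r -> 0 < a -> a < r -> coprime r a -> j < r ->
  exists2 i, i < r & tau_f f r a i = j.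
Proof.
(* The left recursion maps [a, r) onto [0, r-a), the right one maps [0, a) onto [r-a, r). *)
elim: f r a j => [|f IH] r a j le_rf r_gt1 a_gt0 lt_ar co_ra lt_jr; first lia.
have [base|not_base] := boolP ((a == 1) || (a == r.-1)).
  have [i lt_i tau_i] := affine_mod_onto r.-1 co_ra lt_jr.
  by exists i; rewrite //= base.
have /norP[a_neq1 a_neqr1] := not_base.
have a_gt1 : 1 < a by lia.
have [lt_j_ra|le_ra_j] := ltnP j (r - a).
- have ra_gt1 : 1 < r - a by lia.
  have co_rar : coprime (r - a) r by rewrite coprime_sym coprime_subr // ltnW.
  have rmod_gt0 : 0 < r %% (r - a) by rewrite coprime_mod_gt0.
  have rmod_lt : r %% (r - a) < r - a by rewrite ltn_pmod // ltnW.
  have co_rmod : coprime (r - a) (r %% (r - a)) by rewrite coprime_modr.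
  have [k lt_k tau_k] :=
    IH (r - a) (r %% (r - a)) j ltac:(lia) ra_gt1 rmod_gt0 rmod_lt co_rmod lt_j_ra.
  have [i /andP[le_ai lt_i] mod_i] := exists_mod_window a (ltnW ra_gt1) lt_k.
  by exists i; [lia | rewrite /= (negbTE not_base) le_ai mod_i].
- have rmod_gt0 : 0 < r %% a by rewrite coprime_mod_gt0 // coprime_sym.
  have rmod_lt := ltn_pmod r a_gt0.
  have neg_rmod : (a - r %% a) %% a = a - r %% a by rewrite modn_small //; lia.
  have co_neg : coprime a ((a - r %% a) %% a).
    by rewrite neg_rmod coprime_subr ?coprime_modr 1?coprime_sym // ltnW.
  have [i lt_i tau_i] := IH a ((a - r %% a) %% a) (j - (r - a)) ltac:(lia) a_gt1
    ltac:(by rewrite neg_rmod subn_gt0) ltac:(by rewrite neg_rmod; lia) co_neg ltac:(lia).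
  by exists i; [lia | rewrite /= (negbTE not_base) leqNgt lt_i /= tau_i; lia].
Qed.

Lemma find_iota0 (p : pred nat) n k : k < n -> p k ->
  (forall m, m < k -> ~~ p m) -> find p (iota 0 n) = k.
Proof.
move=> lt_kn pk before_k.
have has_p : has p (iota 0 n) by apply/hasP; exists k; rewrite ?mem_iota.
have lt_find : find p (iota 0 n) < n by rewrite -[X in _ < X](size_iota 0 n) -has_find.
case: (ltngtP (find p (iota 0 n)) k) => // [lt_fk|lt_kf].
  by move: (before_k _ lt_fk) (nth_find 0 has_p); rewrite nth_iota // add0n => /negbTE ->.
by move: pk (before_find 0 lt_kf); rewrite nth_iota // add0n => ->.
Qed.

Lemma xi_spec r a j : 1 < r -> 0 < a -> a < r -> coprime r a -> j < r ->
  xi r a j < r /\ tau r a (xi r a j) = j.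
Proof.
move=> r_gt1 a_gt0 lt_ar co_ra lt_jr.
have [i lt_ir tau_i] := tau_f_onto (leqnn r) r_gt1 a_gt0 lt_ar co_ra lt_jr.
have has_j : has (fun i => tau r a i == j) (iota 0 r).
  by apply/hasP; exists i; rewrite ?mem_iota //; apply/eqP.
have lt_xi : xi r a j < r by rewrite /xi -[X in _ < X](size_iota 0 r) -has_find.
by split=> //; have /eqP := nth_find 0 has_j; rewrite (nth_iota _ _ lt_xi).
Qed.

Lemma summation_by_parts (R : pzRingType) (s t : nat -> R) n :
  (\sum_(k < n) (s k - s k.+1) * \sum_(m < k.+1) t m
   = \sum_(k < n.+1) s k * t k - s n * \sum_(m < n.+1) t m)%R.
Proof.
elim: n => [|n IH]; first by rewrite big_ord0 !big_ord1 subrr.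
rewrite big_ord_recr IH /= (big_ord_recr n.+1) (big_ord_recr n.+1 t) /=.
set A := (\sum_(i < n.+1) _)%R; set P := (\sum_(i < n.+1) _)%R.
by rewrite mulrBl mulrDr opprD addrA subrK (addrC (- _)%R) addrA addrK.
Qed.

Lemma exists_switch (s : nat -> bool) n k l : k <= n -> l <= n -> s k != s l ->
  exists2 i, i < n & s i != s i.+1.
Proof.
move=> le_kn le_ln neq_kl.
have [/existsP[i switch_i]|/existsPn no_switch] := boolP [exists i : 'I_n, s i != s i.+1].
  by exists i.
have s_const i : i <= n -> s i = s 0.
  elim: i => // i IH lt_in; rewrite -IH; last exact: ltnW.
  by apply/eqP; rewrite -[_ == _]negbK eq_sym (no_switch (Ordinal lt_in)).
by rewrite (s_const k) // (s_const l) // eqxx in neq_kl.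
Qed.

Definition closed_under (r : nat) (e : 'I_r -> 'I_r -> Prop) (S : {set 'I_r}) : Prop :=
  forall i k, i \in S -> e i k -> k \in S.

Section Cuts.

Variables (r : nat) (h : nat -> 'I_r).
Hypothesis h_inj : forall m n, m < r -> n < r -> h m = h n -> m = n.

Lemma ord_restr_inj : injective (fun m : 'I_r => h m).
Proof. by move=> m n /(h_inj (ltn_ord m) (ltn_ord n)) /val_inj. Qed.

Lemma inj_nat_ord_onto (v : 'I_r) : exists2 k, k < r & v = h k.
Proof. by have /codomP[k ->] := injF_onto ord_restr_inj v; exists k. Qed.

Definition prefix_set k : {set 'I_r} :=
  [set v | [exists m : 'I_r, (m <= k) && (v == h m)]].

Lemma mem_prefix_set m k : m < r -> (h m \in prefix_set k) = (m <= k).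
Proof.
move=> lt_mr; rewrite inE; apply/existsP/idP => [[n /andP[le_nk /eqP]]|le_mk].
  by move=> /h_inj -> //.
by exists (Ordinal lt_mr); rewrite le_mk eqxx.
Qed.

Lemma prefix_set_neq0 k : 0 < r -> prefix_set k != set0.
Proof. by move=> r_gt0; apply/set0Pn; exists (h 0); rewrite mem_prefix_set. Qed.

Lemma prefix_set_neqT k : k.+1 < r -> prefix_set k != setT.
Proof.
move=> lt_k1r; apply/negP => /eqP full.
by have := in_setT (h k.+1); rewrite -full mem_prefix_set // ltnn.
Qed.

Lemma setC_prefix_set_neq0 k : k.+1 < r -> ~: prefix_set k != set0.
Proof.
by move=> lt_k1r; apply/set0Pn; exists (h k.+1); rewrite in_setC mem_prefix_set // ltnn.
Qed.

Lemma setC_prefix_set_neqT k : 0 < r -> ~: prefix_set k != setT.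
Proof.
move=> r_gt0; apply/negP => /eqP full.
by have := in_setT (h 0); rewrite -full in_setC mem_prefix_set.
Qed.

Variable theta : 'I_r -> rat.

Lemma theta_prefix_set k : k < r ->
  theta_of theta (prefix_set k) = (\sum_(m < k.+1) theta (h m))%R.
Proof.
move=> lt_kr; rewrite /theta_of (reindex_inj ord_restr_inj).
rewrite (big_ord_widen r (fun m => theta (h m)) lt_kr) /=.
by apply: eq_bigl => m; rewrite mem_prefix_set.
Qed.

Hypothesis theta_sum0 : (\sum_i theta i = 0)%R.

Lemma theta_setC A : theta_of theta (~: A) = (- theta_of theta A)%R.
Proof.
apply/eqP; rewrite -addr_eq0 addrC -[X in _ == X]theta_sum0 (bigID [in A]) /=.
by apply/eqP; congr (_ + _)%R; apply: eq_bigl => i; rewrite in_setC.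
Qed.

Definition cut_term (S : {set 'I_r}) k :=
  (((h k \in S)%:R - (h k.+1 \in S)%:R) * theta_of theta (prefix_set k))%R.

Lemma theta_cut_terms S : 0 < r -> theta_of theta S = (\sum_(k < r.-1) cut_term S k)%R.
Proof.
move=> r_gt0.
have sum_h0 : (\sum_(m < r) theta (h m) = 0)%R.
  by rewrite -[RHS]theta_sum0 [RHS](reindex_inj ord_restr_inj).
have := summation_by_parts (fun k => (h k \in S)%:R%R) (fun k => theta (h k)) r.-1.
rewrite prednK // sum_h0 mulr0 subr0 => by_parts.
rewrite /theta_of (reindex_inj ord_restr_inj) big_mkcond /=.
transitivity (\sum_(k < r.-1)
  ((h k \in S)%:R - (h k.+1 \in S)%:R) * \sum_(m < k.+1) theta (h m))%R.
  by rewrite by_parts; apply: eq_bigr => k _; case: (h k \in S); rewrite ?mul1r ?mul0r.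
by apply: eq_bigr => k _; rewrite /cut_term theta_prefix_set //; have := ltn_ord k; lia.
Qed.

Variable e : 'I_r -> 'I_r -> Prop.
Hypothesis e_adj : forall m n, m < r -> n < r -> e (h m) (h n) -> n = m.+1 \/ m = n.+1.

Lemma closed_prefix_set k : ~ e (h k) (h k.+1) -> closed_under e (prefix_set k).
Proof.
move=> no_exit u v.
have [m lt_mr ->] := inj_nat_ord_onto u; have [n lt_nr ->] := inj_nat_ord_onto v.
rewrite !mem_prefix_set // => le_mk e_mn.
case: (e_adj lt_mr lt_nr e_mn) => [eq_nm|]; last lia.
rewrite eq_nm ltn_neqAle le_mk andbT; apply/eqP => eq_mk.
by apply: no_exit; rewrite -eq_mk -eq_nm.
Qed.

Lemma closed_setC_prefix_set k : ~ e (h k.+1) (h k) -> closed_under e (~: prefix_set k).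
Proof.
move=> no_exit u v.
have [m lt_mr ->] := inj_nat_ord_onto u; have [n lt_nr ->] := inj_nat_ord_onto v.
rewrite !in_setC !mem_prefix_set // -!ltnNge => lt_km e_mn.
case: (e_adj lt_mr lt_nr e_mn) => [|eq_mn]; first lia.
rewrite ltn_neqAle (_ : k <= n) ?andbT; last lia.
by apply/eqP => eq_kn; apply: no_exit; rewrite eq_kn -eq_mn.
Qed.

Lemma cut_term_cases S k : closed_under e S ->
  [\/ (h k \in S) = (h k.+1 \in S) /\ cut_term S k = 0%R,
      closed_under e (prefix_set k) /\ cut_term S k = theta_of theta (prefix_set k)
    | closed_under e (~: prefix_set k) /\ cut_term S k = theta_of theta (~: prefix_set k)].
Proof.
move=> closedS; rewrite /cut_term theta_setC.
case Sk: (h k \in S); case Sk1: (h k.+1 \in S).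
- by constructor 1; rewrite subrr mul0r.
- constructor 2; split; last by rewrite subr0 mul1r.
  by apply: closed_prefix_set => e_k; move: (closedS _ _ Sk e_k); rewrite Sk1.
- constructor 3; split; last by rewrite sub0r mulN1r.
  by apply: closed_setC_prefix_set => e_k; move: (closedS _ _ Sk1 e_k); rewrite Sk.
- by constructor 1; rewrite subrr mul0r.
Qed.

Lemma exists_cut S : S != set0 -> S != setT ->
  exists2 k, k.+1 < r & (h k \in S) != (h k.+1 \in S).
Proof.
move=> /set0Pn[u Su] ST; have /existsP[v Sv] : [exists v, v \notin S].
  apply: contraNT ST => /existsPn S_full; apply/eqP/setP => v.
  by rewrite in_setT; have := S_full v; rewrite negbK.
have [m lt_mr eq_u] := inj_nat_ord_onto u; have [n lt_nr eq_v] := inj_nat_ord_onto v.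
have [k lt_k switch_k] : exists2 k, k < r.-1 & (h k \in S) != (h k.+1 \in S).
  by apply: (@exists_switch _ _ m n); rewrite -?eq_u -?eq_v ?Su ?(negbTE Sv) //; lia.
by exists k; first lia.
Qed.

Lemma cut_term_ge0 S k :
  (forall k, k.+1 < r -> closed_under e (~: prefix_set k) ->
     (0 <= theta_of theta (~: prefix_set k))%R) ->
  (forall k, k.+1 < r -> closed_under e (prefix_set k) ->
     (0 <= theta_of theta (prefix_set k))%R) ->
  closed_under e S -> k.+1 < r -> (0 <= cut_term S k)%R.
Proof.
move=> ge0_setC ge0_prefix closedS lt_k1r.
by case: (cut_term_cases k closedS) => -[cl ->]; [|apply: ge0_prefix | apply: ge0_setC].
Qed.

Lemma stable_cutsP :
  (forall S, S != set0 -> S != setT -> closed_under e S -> (0 < theta_of theta S)%R) <->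
  (forall k, k.+1 < r -> closed_under e (~: prefix_set k) ->
     (0 < theta_of theta (~: prefix_set k))%R) /\
  (forall k, k.+1 < r -> closed_under e (prefix_set k) ->
     (0 < theta_of theta (prefix_set k))%R).
Proof.
split=> [stable_S|[gt0_setC gt0_prefix] S S0 ST closedS].
  split=> k lt_k1r; apply: stable_S.
  - exact: setC_prefix_set_neq0.
  - by apply: setC_prefix_set_neqT; lia.
  - by apply: prefix_set_neq0; lia.
  - exact: prefix_set_neqT.
have [k lt_k1r switch_k] := exists_cut S0 ST.
have lt_k : k < r.-1 by lia.
rewrite theta_cut_terms; last lia.
rewrite (bigD1 (Ordinal lt_k)) //=; apply: ltr_pwDl.
  case: (cut_term_cases k closedS) => -[cl ->]; last exact: gt0_setC.
    by rewrite cl eqxx in switch_k.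
  exact: gt0_prefix.
apply: sumr_ge0 => i _; apply: cut_term_ge0 => //.
- by move=> l lt_l1r cl; apply/ltW/gt0_setC.
- by move=> l lt_l1r cl; apply/ltW/gt0_prefix.
- by have := ltn_ord i; lia.
Qed.

Lemma semistable_cutsP :
  (forall S, S != set0 -> S != setT -> closed_under e S -> (0 <= theta_of theta S)%R) <->
  (forall k, k.+1 < r -> closed_under e (~: prefix_set k) ->
     (0 <= theta_of theta (~: prefix_set k))%R) /\
  (forall k, k.+1 < r -> closed_under e (prefix_set k) ->
     (0 <= theta_of theta (prefix_set k))%R).
Proof.
split=> [semistable_S|[ge0_setC ge0_prefix] S /set0Pn[u _] ST closedS].
  split=> k lt_k1r; apply: semistable_S.
  - exact: setC_prefix_set_neq0.
  - by apply: setC_prefix_set_neqT; lia.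
  - by apply: prefix_set_neq0; lia.
  - exact: prefix_set_neqT.
rewrite theta_cut_terms; last by have := ltn_ord u; lia.
apply: sumr_ge0 => i _; apply: cut_term_ge0 => //.
by have := ltn_ord i; lia.
Qed.

End Cuts.

Definition nonzero_arrow (r a : nat) (V : mckay_rep) (i k : 'I_r) : Prop :=
  (rep_x V i != 0%R /\ val k = (i + 1) %% r) \/
  (rep_y V i != 0%R /\ val k = (i + a) %% r) \/
  (rep_z V i != 0%R /\ val k = (i + (r - a)) %% r).

Lemma is_subrepE r a (V : mckay_rep) :
  @is_subrep r a V = closed_under (nonzero_arrow a V).
Proof. by []. Qed.

Section Walk.

Variables (r a x : nat).

Definition walk k := (x + k.+1 * (r - a)) %% r.

Definition walk_ord (r_gt0 : 0 < r) k : 'I_r := @Ordinal r (walk k) (ltn_pmod _ r_gt0).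

Lemma walk_inj m n : coprime r a -> a <= r -> m < r -> n < r ->
  walk m = walk n -> m = n.
Proof.
move=> co_ra le_ar lt_mr lt_nr /eqP; rewrite /walk !mulSn !addnA eqn_modDl => /eqP.
by apply: coprime_mulmod_inj; rewrite ?coprime_subr.
Qed.

Lemma walk_add k m : (walk k + m * (r - a)) %% r = walk (k + m).
Proof. by rewrite /walk modnDml -addnA -mulnDl addSn. Qed.

Lemma walk_succ k : (walk k + (r - a)) %% r = walk k.+1.
Proof. by rewrite -[X in _ + X]mul1n walk_add addn1. Qed.

Lemma walk_back k : a <= r -> (walk k + a) %% r = (x + k * (r - a)) %% r.
Proof.
move=> le_ar; rewrite /walk modnDml.
have -> : x + k.+1 * (r - a) + a = x + k * (r - a) + r by rewrite mulSn; lia.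
exact: modnDr.
Qed.

Lemma walk_last : 0 < r -> x < r -> walk r.-1 = x.
Proof. by move=> r_gt0 lt_xr; rewrite /walk prednK // mulnC addnC modnMDl modn_small. Qed.

End Walk.

(* X_i contains E_1, which vanishes at every torus-fixed point. *)
Lemma Frep_x0 r a j i : rep_x (Frep r a j) i = 0%R.
Proof. by rewrite /= /fixval /Xdiv /= big1. Qed.

Lemma Frep_y0 r a j x : a <= r -> x < r -> tau r a x = j ->
  rep_y (Frep r a j) (walk r a x 0) = 0%R.
Proof.
move=> le_ar lt_xr tau_x.
by rewrite /= /fixval /= walk_back // mul0n addn0 modn_small // tau_x leqnn.
Qed.

Lemma Frep_z0 r a j x : x < r -> tau r a x = j -> j < r -> rep_z (Frep r a j) x = 0%R.
Proof.
by move=> lt_xr tau_x lt_jr; rewrite /= /fixval /= modn_small // tau_x ltnn ltnSn lt_jr.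
Qed.

Section Family.

Variables (r a j : nat).
Hypotheses (r_gt1 : 1 < r) (a_gt0 : 0 < a) (lt_ar : a < r) (co_ra : coprime r a).
Hypothesis lt_jr : j < r.

Let r_gt0 : 0 < r := ltnW r_gt1.
Let le_ar : a <= r := ltnW lt_ar.

Let xi_lt : xi r a j < r := (xi_spec r_gt1 a_gt0 lt_ar co_ra lt_jr).1.
Let tau_xi : tau r a (xi r a j) = j := (xi_spec r_gt1 a_gt0 lt_ar co_ra lt_jr).2.

Local Notation h := (walk_ord a (xi r a j) r_gt0).

Lemma walk_ord_inj m n : m < r -> n < r -> h m = h n -> m = n.
Proof. by move=> lt_mr lt_nr /(congr1 val); apply: walk_inj. Qed.

Lemma Frep_adjacent m n : m < r -> n < r ->
  nonzero_arrow a (Frep r a j) (h m) (h n) -> n = m.+1 \/ m = n.+1.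
Proof.
move=> lt_mr lt_nr [[]|[[]|[]]]; first by rewrite Frep_x0 eqxx.
- case: m lt_mr => [|m] lt_mr.
    by move=> /negP[]; apply/eqP; apply: Frep_y0.
  by move=> _ /= /esym; rewrite walk_back // => /walk_inj ->; [right | | | lia |].
- have [->|lt_m1r] := eqVneq m r.-1.
    have z0 := Frep_z0 xi_lt tau_xi lt_jr; rewrite -(walk_last a r_gt0 xi_lt) in z0.
    by move=> /negP[]; apply/eqP; apply: z0.
  by move=> _ /= /esym; rewrite walk_succ => /walk_inj ->; [left | | | lia |].
Qed.

Lemma mem_Wset m k : m < r -> k < r -> (h m \in Wset r a (h k) j) = (m <= k).
Proof.
move=> lt_mr lt_kr; rewrite /Wset inE /= (@find_iota0 _ r k) //; last first.
  by move=> n lt_nk; apply/eqP => /walk_inj; lia.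
apply/existsP/idP => [[n /eqP /walk_inj]|le_mk]; first by have := ltn_ord n; lia.
by exists (Ordinal (le_mk : m < k.+1)).
Qed.

Lemma mem_Vset m k : m < r -> k < r -> (h m \in Vset r a (h k) j) = (k <= m).
Proof.
move=> lt_mr lt_kr; rewrite /Vset inE /= (@find_iota0 _ r (r.-1 - k)); first last.
- move=> n lt_n; rewrite walk_add -{2}(walk_last a r_gt0 xi_lt).
  by apply/eqP => /walk_inj; lia.
- by rewrite walk_add subnKC ?walk_last //; lia.
- lia.
apply/existsP/idP => [[n /eqP]|le_km].
  by rewrite walk_add => /walk_inj; have := ltn_ord n; lia.
have lt_mk : m - k < (r.-1 - k).+1 by lia.
by exists (Ordinal lt_mk); rewrite /= walk_add subnKC.
Qed.

Lemma Wset_prefix_set k : k < r -> Wset r a (h k) j = prefix_set h k.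
Proof.
move=> lt_kr; apply/setP => v; have [m lt_mr ->] := inj_nat_ord_onto walk_ord_inj v.
by rewrite mem_Wset // (mem_prefix_set walk_ord_inj).
Qed.

Lemma Vset_setC_prefix_set k : k.+1 < r -> Vset r a (h k.+1) j = ~: prefix_set h k.
Proof.
move=> lt_k1r; apply/setP => v; have [m lt_mr ->] := inj_nat_ord_onto walk_ord_inj v.
by rewrite in_setC mem_Vset // (mem_prefix_set walk_ord_inj) // -ltnNge.
Qed.

Lemma Vset_first : Vset r a (h 0) j = setT.
Proof.
apply/setP => v; have [m lt_mr ->] := inj_nat_ord_onto walk_ord_inj v.
by rewrite mem_Vset // in_setT.
Qed.

Lemma forall_Vset (Q : {set 'I_r} -> Prop) :
  (forall i : 'I_r, Vset r a i j != set0 -> Vset r a i j != setT -> Q (Vset r a i j)) <->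
  (forall k, k.+1 < r -> Q (~: prefix_set h k)).
Proof.
split=> [QV k lt_k1r | Qcut i].
  rewrite -Vset_setC_prefix_set //; apply: QV; rewrite Vset_setC_prefix_set //.
    exact: (setC_prefix_set_neq0 walk_ord_inj).
  exact: (setC_prefix_set_neqT walk_ord_inj).
have [[|k] lt_kr ->] := inj_nat_ord_onto walk_ord_inj i; first by rewrite Vset_first eqxx.
by rewrite Vset_setC_prefix_set // => _ _; apply: Qcut.
Qed.

Lemma forall_Wset (Q : {set 'I_r} -> Prop) :
  (forall i : 'I_r, Wset r a i j != set0 -> Wset r a i j != setT -> Q (Wset r a i j)) <->
  (forall k, k.+1 < r -> Q (prefix_set h k)).
Proof.
split=> [QW k lt_k1r | Qcut i].
  rewrite -Wset_prefix_set 1?ltnW //; apply: QW; rewrite Wset_prefix_set 1?ltnW //.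
    exact: (prefix_set_neq0 walk_ord_inj).
  exact: (prefix_set_neqT walk_ord_inj).
have [k lt_kr ->] := inj_nat_ord_onto walk_ord_inj i; have [lt_k1r|le_rk1] := ltnP k.+1 r.
  by rewrite Wset_prefix_set // => _ _; apply: Qcut.
suff -> : Wset r a (h k) j = setT by rewrite eqxx.
apply/setP => v; have [m lt_mr ->] := inj_nat_ord_onto walk_ord_inj v.
by rewrite mem_Wset // in_setT; lia.
Qed.

End Family.

Theorem mainTheorem15 (r a : nat) (hr : 1 < r) (ha0 : 0 < a) (har : a < r)
  (hcop : coprime r a) (theta : 'I_r -> rat)
  (htheta : (\sum_(i < r) theta i = 0)%R) (j : 'I_r) :
  (stable a theta (Frep r a j) <->
     ((forall i : 'I_r, Vset r a i j != set0 -> Vset r a i j != setT ->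
         is_subrep a (Frep r a j) (Vset r a i j) ->
         (0 < theta_of theta (Vset r a i j))%R) /\
      (forall i : 'I_r, Wset r a i j != set0 -> Wset r a i j != setT ->
         is_subrep a (Frep r a j) (Wset r a i j) ->
         (0 < theta_of theta (Wset r a i j))%R))) /\
  (semistable a theta (Frep r a j) <->
     ((forall i : 'I_r, Vset r a i j != set0 -> Vset r a i j != setT ->
         is_subrep a (Frep r a j) (Vset r a i j) ->
         (0 <= theta_of theta (Vset r a i j))%R) /\
      (forall i : 'I_r, Wset r a i j != set0 -> Wset r a i j != setT ->
         is_subrep a (Frep r a j) (Wset r a i j) ->
         (0 <= theta_of theta (Wset r a i j))%R))).
Proof.
have lt_jr := ltn_ord j.
have h_inj := @walk_ord_inj r a j hr har hcop.
have adj := @Frep_adjacent r a j hr ha0 har hcop lt_jr.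
have eqV := forall_Vset hr ha0 har hcop lt_jr.
have eqW := forall_Wset hr ha0 har hcop lt_jr.
rewrite /stable /semistable is_subrepE.
rewrite (stable_cutsP h_inj htheta adj) (semistable_cutsP h_inj htheta adj).
pose arrow := @nonzero_arrow r a (Frep r a j).
rewrite (eqV (fun S => closed_under arrow S -> 0 < theta_of theta S)%R).
rewrite (eqW (fun S => closed_under arrow S -> 0 < theta_of theta S)%R).
rewrite (eqV (fun S => closed_under arrow S -> 0 <= theta_of theta S)%R).
by rewrite (eqW (fun S => closed_under arrow S -> 0 <= theta_of theta S)%R).
Qed.
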